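(* Let $(S,\mathcal C)$ be a connectoid and $N\subseteq S$ a countably infinite connected set. Then $N$ is a necklace if and only if for every finite set $Y\subseteq N$ there is an element of $\mathcal K(N\setminus Y)$ containing almost all elements of $N$. Furthermore, if $N$ is a necklace, then the $X$-tail of $N$ is a necklace for every finite set $X\subseteq S$.
   Context: A connectoid is given by a set $S$ and a set $\mathcal F$ of finite subsets of $S$ such that (i) $F\cup F'\in\mathcal F$ whenever $F,F'\in\mathcal F$ and $F\cap F'\neq\emptyset$, and (ii) $\emptyset\in\mathcal F$ and $\{s\}\in\mathcal F$ for every $s\in S$. A set $C\subseteq S$ is connected if for all $x,y\in C$ there is $F\in\mathcal F$ with $F\subseteq C$ and $x,y\in F$; $\mathcal C$ is the set of connected sets. For $S'\subseteq S$, a component of $S'$ is a maximal connected subset of $S'$, and $\mathcal K(S')$ is the set of components of $S'$. ''Almost all'' means all but finitely many. A necklace is a connected set $N$ for which there is a family $(H_n)_{n\in\mathbb N}$ of finite connected sets with $N=\bigcup_n H_n$ and $H_i\cap H_j\neq\emptyset$ iff $|i-j|\le 1$. For a necklace $N$ and finite $X\subseteq S$, the $X$-tail of $N$ is the unique element of $\mathcal K(N\setminus X)$ containing almost all elements of $N$. *)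

From mathcomp Require Import all_boot.
From mathcomp Require Import boolp classical_sets functions cardinality.
Set Implicit Arguments. Unset Strict Implicit. Unset Printing Implicit Defensive.
Local Open Scope classical_set_scope.

Record connectoid (S : Type) := Connectoid {
  fam : set (set S);
  fam_finite : forall F, fam F -> finite_set F;
  fam_union : forall F F', fam F -> fam F' -> F `&` F' !=set0 -> fam (F `|` F');
  fam_set0 : fam set0;
  fam_set1 : forall s, fam [set s]
}.

Section Defs.
Variables (S : Type) (K : connectoid S).

Definition connected_set (C : set S) : Prop :=
  forall x y, C x -> C y -> exists F, fam K F /\ F `<=` C /\ F x /\ F y.

Definition component (S' C : set S) : Prop :=
  [/\ C `<=` S', connected_set C &
      forall D, D `<=` S' -> connected_set D -> C `<=` D -> D = C].

Definition almost_all (N C : set S) : Prop := finite_set (N `\` C).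

Definition necklace (N : set S) : Prop :=
  connected_set N /\
  exists H : nat -> set S,
    (forall n, finite_set (H n) /\ connected_set (H n)) /\
    N = \bigcup_n H n /\
    (forall i j, H i `&` H j !=set0 <-> ((i <= j.+1) && (j <= i.+1))%N).

Definition is_tail (N X T : set S) : Prop :=
  component (N `\` X) T /\ almost_all N T.

End Defs.

(* A finite set Y ⊆ N meets only finitely many beads of a necklace N; the
   beads beyond them form a connected tail avoiding Y, so the component of
   N \ Y containing that tail contains almost all of N.  The same argument shows
   that the X-tail T of a necklace contains all late beads; a finite connected
   subset of T covering what T keeps of the earlier beads, merged with the
   beads up to its last one, is the first bead of a necklace decomposition of T.
   Conversely, write N as a union of finite sets E n and choose finite Y n with
   N \ Y n connected: Y (n+1) is the complement in N of the almost-all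
   component of N \ (Y n ∪ B (n-1) ∪ E n), and the bead B n is a finite
   connected subset of N \ Y n containing Y (n+1) \ Y n and a point outside
   Y (n+1).  Then B i ⊆ Y (i+2) ⊆ Y j misses B j for j ≥ i+2, while the point
   of B n outside Y (n+1) lies in Y (n+2) \ Y (n+1) ⊆ B (n+1). *)

From mathcomp Require Import all_boot boolp classical_sets cardinality.
From mathcomp Require Import zify.
Set Implicit Arguments. Unset Strict Implicit.
Local Open Scope classical_set_scope.
Local Open Scope card_scope.

Lemma finite_set_ind (T : Type) (P : set T -> Prop) :
  P set0 -> (forall x A, finite_set A -> P A -> P (x |` A)) ->
  forall A, finite_set A -> P A.
Proof.
elim/Pchoice: T P => T P P0 PU A /finite_fsetP[X ->].
elim/finmap.fset1U_rect: X => [|x X _ IH]; first by rewrite set_fset0.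
by rewrite set_fsetU1; apply: PU => //; exact: finite_fset.
Qed.

Lemma finite_bigcup_cover (T : Type) (H : nat -> set T) (A : set T) :
  finite_set A -> A `<=` \bigcup_n H n ->
  exists m, A `<=` \bigcup_(n in `I_m) H n.
Proof.
move: A; apply: finite_set_ind => [_|x A _ IH]; first by exists 0%N.
move=> xAH; have [m Am] := IH (subset_trans (@subsetUr _ _ A) xAH).
have [n _ Hx] := xAH x (or_introl erefl).
exists (maxn m n.+1) => y [->|/Am [k km Hy]].
- by exists n => //=; rewrite leq_max ltnSn orbT.
- by exists k => //=; rewrite leq_max km.
Qed.

Lemma finite_fibre_inj (T U : Type) (A : set T) (f : T -> U) (u : U) :
  {in A &, injective f} -> finite_set (A `&` f @^-1` [set u]).
Proof.
move=> f_inj; have [[x [Ax fx]]|no_x] := pselect (exists x, (A `&` f @^-1` [set u]) x).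
  apply: sub_finite_set (finite_set1 x) => y [Ay fy] /=.
  by apply: f_inj; rewrite ?inE // fy fx.
by rewrite (_ : _ `&` _ = set0) // -subset0 => y Ay; apply: no_x; exists y.
Qed.

Lemma dependent_choice (A : Type) (P : A -> Prop) (R : nat -> A -> A -> Prop)
    (a0 : A) : P a0 -> (forall n a, P a -> exists2 b, P b & R n a b) ->
  exists u : nat -> A, u 0%N = a0 /\ forall n, P (u n) /\ R n (u n) (u n.+1).
Proof.
move=> Pa0 step.
have [g gP] : {g : nat * A -> A &
    forall na, P na.2 -> P (g na) /\ R na.1 na.2 (g na)}.
  apply: (@choice (nat * A) A (fun na b => P na.2 -> P b /\ R na.1 na.2 b)) => -[n a].
  have [/(step n)[b Pb Rb]|nPa] := pselect (P a); first by exists b.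
  by exists a0.
pose fix u n := if n is k.+1 then g (k, u k) else a0.
have uP n : P (u n) by elim: n => // n IH; exact: (gP (n, u n) IH).1.
by exists u; split=> // n; split=> //; exact: (gP (n, u n) (uP n)).2.
Qed.

Section Connectoid.
Variables (S : Type) (K : connectoid S).
Local Notation connected := (connected_set K).

Lemma fam_connected F : fam K F -> connected F.
Proof. by move=> KF x y Fx Fy; exists F; do !split. Qed.

Lemma connected_setU A B : connected A -> connected B -> A `&` B !=set0 ->
  connected (A `|` B).
Proof.
move=> cA cB [z [Az Bz]].
have across x y : A x -> B y ->
    exists F, fam K F /\ F `<=` A `|` B /\ F x /\ F y.
  move=> Ax By.
  have [F [KF [FA [Fx Fz]]]] := cA x z Ax Az.
  have [G [KG [GB [Gz Gy]]]] := cB z y Bz By.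
  exists (F `|` G); split; first by apply: fam_union => //; exists z.
  by split; [exact: setUSS|split; [left|right]].
move=> x y [Ax|Bx] [Ay|By].
- have [F [KF [FA FF]]] := cA x y Ax Ay.
  by exists F; do !split => //; exact: subset_trans FA (@subsetUl _ _ B).
- exact: across.
- by have [F [? [? [? ?]]]] := across y x Ay Bx; exists F.
- have [F [KF [FB FF]]] := cB x y Bx By.
  by exists F; do !split => //; exact: subset_trans FB (@subsetUr _ A _).
Qed.

Lemma connected_fam_cover C z A : connected C -> C z -> finite_set A ->
  A `<=` C -> exists F, [/\ fam K F, F `<=` C, F z & A `<=` F].
Proof.
move=> cC Cz; move: A; apply: finite_set_ind => [_|x A _ IH].
  by exists [set z]; split=> [|w ->|//|//]; [exact: fam_set1|].
move=> xAC; have [F [KF FC Fz AF]] := IH (subset_trans (@subsetUr _ _ A) xAC).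
have [G [KG [GC [Gz Gx]]]] := cC z x Cz (xAC x (or_introl erefl)).
exists (F `|` G); split; [|by move=> w [/FC|/GC]|by left|].
- by apply: fam_union => //; exists z.
- by move=> w [->|/AF]; [right|left].
Qed.

Lemma component_exists U D : D `<=` U -> connected D -> D !=set0 ->
  exists C, component K U C /\ D `<=` C.
Proof.
move=> DU cD [x0 Dx0].
pose C := [set y | exists E, [/\ E `<=` U, connected E, E x0 & E y]].
have CU : C `<=` U by move=> y [E [EU _ _ /EU]].
have cC : connected C.
  move=> y1 y2 [E1 [E1U cE1 E1x E1y]] [E2 [E2U cE2 E2x E2y]].
  have [F1 [KF1 [F1E [F1y F1x]]]] := cE1 y1 x0 E1y E1x.
  have [F2 [KF2 [F2E [F2x F2y]]]] := cE2 x0 y2 E2x E2y.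
  exists (F1 `|` F2); split; first by apply: fam_union => //; exists x0.
  split; last by split; [left|right].
  by move=> w [/F1E|/F2E] Ew; [exists E1|exists E2].
exists C; split; last by move=> y Dy; exists D.
split=> // D' D'U cD' CD'; apply/seteqP; split=> // y D'y.
by exists D'; split=> //; apply: CD'; exists D.
Qed.

Lemma component_absorb U C D : component K U C -> D `<=` U -> connected D ->
  D `&` C !=set0 -> D `<=` C.
Proof.
move=> [CU cC maxC] DU cD DC.
have cCD : connected (C `|` D) by apply: connected_setU => //; rewrite setIC.
rewrite -(maxC _ _ cCD (@subsetUl _ _ D)); first exact: subsetUr.
by move=> x [/CU|/DU].
Qed.

Section Chain.
Variable H : nat -> set S.
Hypotheses (H_connected : forall n, connected (H n))
           (H_meet_next : forall n, H n `&` H n.+1 !=set0).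

Lemma chain_fam i j x y : (i <= j)%N -> H i x -> H j y ->
  exists F, [/\ fam K F, F `<=` \bigcup_(n in [set n | i <= n <= j]%N) H n,
                F x & F y].
Proof.
move=> /subnKC <-; elim: (j - i)%N y => [|d IH] y Hx; rewrite ?addn0 ?addnS => Hy.
  have [F [KF [FH [Fx Fy]]]] := H_connected Hx Hy.
  by exists F; split=> // w /FH Hw; exists i => //=; rewrite leqnn.
have [z [Hz Hz']] := H_meet_next (i + d).
have [F [KF FI Fx Fz]] := IH z Hx Hz.
have [G [KG [GH [Gz Gy]]]] := H_connected Hz' Hy.
exists (F `|` G); split; [|move=> w [/FI [n /= nid Hw]|/GH Hw]|by left|by right].
- by apply: fam_union => //; exists z.
- by exists n => //=; lia.
- by exists (i + d).+1 => //=; lia.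
Qed.

Lemma bigcup_chain_connected (I : set nat) :
  (forall i j k, I i -> I j -> (i <= k <= j)%N -> I k) ->
  connected (\bigcup_(n in I) H n).
Proof.
move=> Iconvex.
suff oriented i j x y : I i -> I j -> (i <= j)%N -> H i x -> H j y ->
    exists F, fam K F /\ F `<=` \bigcup_(n in I) H n /\ F x /\ F y.
  move=> x y [i Ii Hx] [j Ij Hy]; have [ij|/ltnW ji] := leqP i j.
    exact: oriented Hx Hy.
  by have [F [? [? [? ?]]]] := oriented j i y x Ij Ii ji Hy Hx; exists F.
move=> Ii Ij ij Hx Hy; have [F [KF FI Fx Fy]] := chain_fam ij Hx Hy.
exists F; do !split=> //; move=> w /FI [n nij Hw].
by exists n => //; exact: Iconvex nij.
Qed.

End Chain.

Definition beads (N : set S) (H : nat -> set S) :=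
  [/\ forall n, finite_set (H n) /\ connected (H n), N = \bigcup_n H n,
      forall n, H n !=set0, forall n, H n `&` H n.+1 !=set0 &
      forall i j, (i.+2 <= j)%N -> H i `&` H j = set0].

Lemma necklaceP N : necklace K N <-> connected N /\ exists H, beads N H.
Proof.
split=> [[cN [H [HP [NH meetH]]]]|[cN [H [HP NH H_ne H_next H_far]]]].
  split=> //; exists H; split=> // [n|n|i j ij].
  - have [z [Hz _]] : H n `&` H n !=set0 by apply/meetH; rewrite !leqnSn.
    by exists z.
  - by apply/meetH; lia.
  - apply/seteqP; split=> // z [Hiz Hjz].
    have : H i `&` H j !=set0 by exists z.
    by move/meetH; lia.
have far z i j : H i z -> H j z -> (i.+2 <= j)%N -> False.
  by move=> Hiz Hjz /H_far; rewrite -subset0 => /(_ z); apply.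
split=> //; exists H; split=> //; split=> // i j; split.
  move=> [z [Hiz Hjz]]; apply/negPn/negP; rewrite negb_and -!ltnNge.
  by case/orP; [apply: far Hjz Hiz|apply: far Hiz Hjz].
case/andP; case: (ltngtP i j) => [ij _ ji|ji ij _|<- _ _].
- by have -> : j = i.+1 by lia.
- have -> : i = j.+1 by lia.
  by rewrite setIC.
- by have [z Hz] := H_ne i; exists z.
Qed.

Section Beads.
Variables (N : set S) (H : nat -> set S).
Hypothesis beadsH : beads N H.

Let H_finite n : finite_set (H n). Proof. by case: beadsH => /(_ n)[]. Qed.
Let H_connected n : connected (H n). Proof. by case: beadsH => /(_ n)[]. Qed.
Let N_bigcup : N = \bigcup_n H n. Proof. by case: beadsH. Qed.
Let H_ne n : H n !=set0. Proof. by case: beadsH. Qed.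
Let H_meet_next n : H n `&` H n.+1 !=set0. Proof. by case: beadsH. Qed.
Let H_far i j : (i.+2 <= j)%N -> H i `&` H j = set0.
Proof. by case: beadsH => _ _ _ _; apply. Qed.

Lemma beads_sub n : H n `<=` N.
Proof. by rewrite N_bigcup; exact: bigcup_sup. Qed.

Lemma beads_close i j x : H i x -> H j x -> (j <= i.+1)%N.
Proof.
move=> Hix Hjx; rewrite leqNgt; apply/negP => /H_far.
by rewrite -subset0 => /(_ x); apply.
Qed.

Lemma beads_cover A : finite_set A -> A `<=` N ->
  exists m, A `<=` \bigcup_(n in `I_m) H n.
Proof. by rewrite N_bigcup; exact: finite_bigcup_cover. Qed.

Lemma finite_beads_prefix m : finite_set (\bigcup_(n in `I_m) H n).
Proof. exact: bigcup_finite (finite_II m) (fun n _ => H_finite n). Qed.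

Lemma beads_eventually_sub C : almost_all N C ->
  exists k, forall n, (k <= n)%N -> H n `<=` C.
Proof.
move=> /beads_cover[|m NCm]; first exact: subDsetl.
exists m.+1 => n mn x Hnx; apply: contrapT => nCx.
have [l /= lm Hlx] := NCm x (conj (beads_sub Hnx) nCx).
by have := beads_close Hlx Hnx; lia.
Qed.

Lemma bigcup_tail_connected a : connected (\bigcup_(n in [set n | a <= n]%N) H n).
Proof.
apply: bigcup_chain_connected => // i j k /= ai _ /andP[ik _].
exact: leq_trans ik.
Qed.

Lemma beads_tail_component Y : finite_set Y -> Y `<=` N ->
  exists C, component K (N `\` Y) C /\ almost_all N C.
Proof.
move=> fY YN.
have [k kY] : exists k, forall n, (k <= n)%N -> H n `<=` N `\` Y.
  by apply: beads_eventually_sub; rewrite /almost_all setDD; exact: finite_setIr.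
have [|C [CY tailC]] := component_exists (bigcup_sub kY) (bigcup_tail_connected (a := k)).
  by have [z Hz] := H_ne k; exists z, k => /=.
exists C; split=> //; apply: sub_finite_set (finite_beads_prefix k).
move=> x [+ nCx]; rewrite N_bigcup => -[n _ Hnx].
exists n => //=; rewrite ltnNge; apply/negP => kn.
by apply: nCx; apply: tailC; exists n.
Qed.

Lemma beads_regroup T a G : T `<=` N ->
  \bigcup_(n in [set n | a <= n]%N) H n `<=` T ->
  finite_set G -> connected G -> G `<=` T -> G `&` H a !=set0 ->
  T `&` \bigcup_(n in `I_a) H n `<=` G -> exists H', beads T H'.
Proof.
move=> TN tailT fG cG GT [z [Gz Haz]] headG.
have [b Gb] := beads_cover fG (subset_trans GT TN).
pose c := (a + b)%N.
pose I := [set n | a <= n <= c]%N.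
have IT : \bigcup_(n in I) H n `<=` T.
  by move=> x [n /andP[an _] Hnx]; apply: tailT; exists n.
pose H' n := if n is k.+1 then H (c + n) else G `|` \bigcup_(n in I) H n.
have H'_head x : H' 0 x -> exists2 l, (l <= c)%N & H l x.
  by case=> [/Gb [l /= lb Hlx]|[l /andP[_ lc] Hlx]]; exists l => //; lia.
exists H'; split.
- case=> [|k] /=; last by split.
  split; first by rewrite finite_setU; split=> //; apply: bigcup_finite => //;
    apply: sub_finite_set (finite_II c.+1) => n /andP[_ nc].
  apply: connected_setU => //.
    by apply: bigcup_chain_connected => // i j k /andP[ai _] /andP[_ jc] /andP[ik kj];
      rewrite /I /= (leq_trans ai ik) (leq_trans kj jc).
  by exists z; split=> //; exists a => //; rewrite /I /= leqnn leq_addr.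
- apply/seteqP; split=> [x Tx|x [[|k] _ H'x]].
    have [n _ Hnx] : (\bigcup_n H n) x by rewrite -N_bigcup; exact: TN.
    have [na|an] := ltnP n a.
      by exists 0%N => //; left; apply: headG; split=> //; exists n.
    have [nc|cn] := leqP n c.
      by exists 0%N => //; right; exists n => //; rewrite /I /= an.
    exists (n - c)%N => //; case E: (n - c)%N => [|k] /=; first by lia.
    by rewrite -E subnKC // ltnW.
  + by case: H'x => [/GT|/IT].
  + by apply: tailT; exists (c + k.+1)%N; first by rewrite /= /c; lia.
- by case=> [|k] /=; [exists z; left|].
- case=> [|k] /=.
    have [x [Hcx Hc1x]] := H_meet_next c.
    exists x; split; last by rewrite addn1.
    by right; exists c => //; rewrite /I /= leq_addr leqnn.
  by rewrite [(c + k.+2)%N]addnS.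
- move=> i [|[|j]] // ij /=; apply/seteqP; split=> // x [H'ix Hx].
  have [l lj Hlx] : exists2 l, (l.+2 <= c + j.+2)%N & H l x.
    case: i ij H'ix => [|i] ij; last by exists (c + i.+1)%N => //; lia.
    by move/H'_head => [l lc Hlx]; exists l => //; lia.
  by have := beads_close Hlx Hx; lia.
Qed.

Lemma beads_tail_necklace X T : finite_set X -> is_tail K N X T -> necklace K T.
Proof.
move=> fX [compT NT]; have [TNX cT _] := compT.
have TN : T `<=` N by move=> x /TNX[].
have [a aX] : exists a, forall n, (a <= n)%N -> H n `<=` N `\` X.
  by apply: beads_eventually_sub; rewrite /almost_all setDD; exact: finite_setIr.
have [b bT] := beads_eventually_sub NT.
have tailT : \bigcup_(n in [set n | a <= n]%N) H n `<=` T.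
  apply: component_absorb compT (bigcup_sub aX) (bigcup_tail_connected (a := a)) _.
  have [z Hz] := H_ne (a + b).
  by exists z; split; [exists (a + b)%N => //=; lia|apply: (bT (a + b)%N) => //; lia].
have [z Haz] := H_ne a.
have Tz : T z by apply: tailT; exists a => /=.
have [|G [KG GT Gz headG]] := connected_fam_cover cT Tz _ (@subIsetl _ T
    (\bigcup_(n in `I_a) H n)).
  exact/finite_setIr/finite_beads_prefix.
apply/necklaceP; split=> //; apply: (beads_regroup TN tailT (fam_finite KG)) => //.
- exact: fam_connected.
- by exists z.
Qed.

End Beads.

Section NecklaceOfTails.
Variables (N : set S) (E : nat -> set S).
Hypotheses (N_connected : connected N) (N_infinite : infinite_set N)
  (E_finite : forall n, finite_set (E n)) (N_bigcupE : N = \bigcup_n E n)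
  (N_tails : forall Y, finite_set Y -> Y `<=` N ->
     exists C, component K (N `\` Y) C /\ almost_all N C).

Let cut Y := [/\ finite_set Y, Y `<=` N & connected (N `\` Y)].

Lemma cut_extend W : finite_set W -> W `<=` N ->
  exists2 Y, cut Y & W `<=` Y /\ N `\` Y !=set0.
Proof.
move=> fW WN; have [C [[CNW cC _] NC]] := N_tails fW WN.
have NNC : N `\` (N `\` C) = C by rewrite setDD; apply: setIidr => x /CNW[].
exists (N `\` C); first by split; [|exact: subDsetl|rewrite NNC].
split; first by move=> x Wx; split; [exact: WN|move=> /CNW[]].
rewrite NNC; apply/set0P/eqP => C0; apply: N_infinite.
by move: NC; rewrite /almost_all C0 setD0.
Qed.

Let bead_state (YB : set S * set S) :=
  [/\ cut YB.1, finite_set YB.2 & YB.2 `<=` N].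

Let bead_step n (YB YB' : set S * set S) :=
  [/\ YB.1 `|` YB.2 `|` E n `<=` YB'.1, fam K YB'.2, YB'.2 `<=` N `\` YB.1,
      YB'.1 `\` YB.1 `<=` YB'.2 & YB'.2 `\` YB'.1 !=set0].

Lemma bead_step_exists n YB : bead_state YB ->
  exists2 YB', bead_state YB' & bead_step n YB YB'.
Proof.
case: YB => Y B [[fY YN cY] fB BN] /=.
have EN : E n `<=` N by rewrite N_bigcupE; exact: bigcup_sup.
have [||Y' [fY' Y'N cY'] [YBE [q [Nq Y'q]]]] := @cut_extend (Y `|` B `|` E n).
  - by rewrite !finite_setU.
  - by move=> x [[/YN|/BN]|/EN].
have YY' : Y `<=` Y' by move=> x Yx; apply: YBE; left; left.
have [||B' [KB' B'NY qB' Y'B']] :=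
    @connected_fam_cover _ q (Y' `\` Y) cY _ (finite_setD _ fY').
  - by split=> // /YY'.
  - by move=> x [/Y'N Nx nYx].
exists (Y', B'); first by split; [split|exact: fam_finite KB'|move=> x /B'NY[]].
by split=> //; exists q; split.
Qed.

Lemma necklace_of_tails : necklace K N.
Proof.
have [|u [u0 uP]] := dependent_choice (a0 := (set0, set0)) _ bead_step_exists.
  by split=> //; split=> //; rewrite setD0.
pose Y n := (u n).1; pose B n := (u n.+1).2.
have Y_next n : Y n `<=` Y n.+1.
  by have [_ [YBE _ _ _ _]] := uP n; move=> x Yx; apply: YBE; left; left.
have Y_mono i j : (i <= j)%N -> Y i `<=` Y j.
  move=> /subnKC <-; elim: (j - i)%N => [|d IH]; first by rewrite addn0.
  by rewrite addnS; apply: subset_trans (Y_next _).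
have B_Y n : B n `<=` Y n.+2.
  by have [_ [YBE _ _ _ _]] := uP n.+1; move=> x Bx; apply: YBE; left; right.
have B_out n : B n `<=` N `\` Y n by case: (uP n) => _ [].
have Y_sub_beads n : Y n `<=` \bigcup_(k in `I_n) B k.
  elim: n => [|n IH] x; first by rewrite /Y u0.
  have [Ynx _|nYnx Yn1x] := pselect (Y n x).
    by have [k /= kn Bkx] := IH x Ynx; exists k => //=; exact: ltnW.
  exists n => //=; have [_ [_ _ _ YB _]] := uP n; exact: YB.
apply/necklaceP; split=> //; exists B; split.
- move=> n; have [_ [_ KB _ _ _]] := uP n.
  by split; [exact: fam_finite KB|exact: fam_connected KB].
- apply/seteqP; split=> [x|x [n _ /B_out[]//]].
  rewrite N_bigcupE => -[n _ Enx].
  have [_ [YBE _ _ _ _]] := uP n.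
  by have [k _ Bkx] := Y_sub_beads n.+1 x (YBE x (or_intror Enx)); exists k.
- by move=> n; have [_ [_ _ _ _ [q [Bq _]]]] := uP n; exists q.
- move=> n; have [_ [_ _ _ _ [q [Bq nYq]]]] := uP n.
  have [_ [_ _ _ Y'B _]] := uP n.+1.
  by exists q; split=> //; apply: Y'B; split=> //; exact: B_Y.
- move=> i j ij; apply/seteqP; split=> // x [Bix Bjx].
  by have [_] := B_out j x Bjx; apply; exact: (Y_mono _ _ ij x (B_Y i x Bix)).
Qed.

End NecklaceOfTails.

End Connectoid.

Unset Implicit Arguments.

Theorem corollary2p3 (S : Type) (K : connectoid S) (N : set S) :
  N #= [set: nat] -> connected_set K N ->
  (necklace K N <->
     (forall Y : set S, finite_set Y -> Y `<=` N ->
        exists C, component K (N `\` Y) C /\ almost_all N C)) /\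
  (necklace K N ->
     forall X : set S, finite_set X ->
       forall T, is_tail K N X T -> necklace K T).
Proof.
move=> hN cN; have /card_set_bijP[f [_ f_inj _]] := hN.
have N_infinite : infinite_set N by rewrite (eq_finite_set hN); exact: infinite_nat.
split; first split.
- by case/necklaceP => _ [H beadsH]; exact: beads_tail_component beadsH.
- apply: (necklace_of_tails (E := fun n => N `&` f @^-1` [set n])) => //.
    by move=> n; exact: finite_fibre_inj.
  by apply/seteqP; split=> [x Nx|x [n _ []]//]; exists (f x).
- by case/necklaceP => _ [H beadsH] X fX T; exact: (beads_tail_necklace beadsH fX).
Qed.
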